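(* Consider a closed tandem queueing system of $n\ge1$ single-server nodes $1,\dots,n$ with initial buffer contents $r_1,\dots,r_n\in\{0,1,2,\dots\}$, not all equal to $0$, and service times $\tau_{ik}>0$. Let the departure epochs $d_i(k)\in\underline{\mathbb R}$, $k\ge1$, satisfy for all $i$ and $k\ge1$ $$d_i(k)=\tau_{ik}\otimes a_i(k)\oplus\tau_{ik}\otimes d_i(k-1),\qquad a_1(k)=d_n(k-r_1),\quad a_i(k)=d_{i-1}(k-r_i)\ (i=2,\dots,n),$$ with $d_i(0)=0$ and $d_i(k)=\varepsilon$ for $k<0$. Let $M=\max_i r_i\ (\ge1)$, and for $m\ge0$ let $G_m=(g^m_{ij})$ be the $n\times n$ matrix with $g^m_{ij}=0$ if ($j=i+1\le n$ and $r_j=m$) or ($i=n$, $j=1$ and $r_1=m$), and $g^m_{ij}=\varepsilon$ otherwise (for $n=1$ this means $g^m_{11}=0$ iff $r_1=m$). Then the graph associated with $G_0$ is acyclic, and, with $p$ the length of its longest path and $\mathcal T_k=\mathrm{diag}(\tau_{1k},\dots,\tau_{nk})$, for all $k\ge1$ $$\mathbf d(k)=\bigoplus_{m=1}^{M}T_m(k)\otimes\mathbf d(k-m),$$ where $T_1(k)=(E\oplus\mathcal T_k\otimes G_0^T)^p\otimes\mathcal T_k\otimes(E\oplus G_1^T)$ and $T_m(k)=(E\oplus\mathcal T_k\otimes G_0^T)^p\otimes\mathcal T_k\otimes G_m^T$ for $m=2,\dots,M$.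
   Context: Max-plus algebra: on $\underline{\mathbb R}=\mathbb R\cup\{\varepsilon\}$ with $\varepsilon=-\infty$, define $x\oplus y=\max(x,y)$ and $x\otimes y=x+y$ (with $x\otimes\varepsilon=\varepsilon\otimes x=\varepsilon$). For matrices, $(X\oplus Y)_{ij}=x_{ij}\oplus y_{ij}$, $(X\otimes Y)_{ij}=\bigoplus_k x_{ik}\otimes y_{kj}$; matrix–vector products likewise; $\bigoplus$ denotes iterated $\oplus$ (maximum). $E$ is the $n\times n$ identity (diagonal $0$, off-diagonal $\varepsilon$); $X^0=E$, $X^q=X\otimes X^{q-1}$; $X^T$ is the transpose. The graph associated with an $n\times n$ matrix $X$ has vertices $\{1,\dots,n\}$ and an arc $(i,j)$ iff $x_{ij}\ne\varepsilon$ (loops count as cycles); path length = number of arcs. $\mathbf d(k)=(d_1(k),\dots,d_n(k))^T$. *)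

From HB Require Import structures.
From mathcomp Require Import all_boot all_order all_algebra.
Set Implicit Arguments. Unset Strict Implicit. Unset Printing Implicit Defensive.
Import Order.TTheory GRing.Theory Num.Theory.
Local Open Scope ring_scope.

Section MaxPlus.
Variable R : realFieldType.

Definition mp := option R.
Definition eps : mp := None.

Definition mp_plus (x y : mp) : mp :=
  match x, y with
  | None, _ => y
  | _, None => x
  | Some a, Some b => Some (Num.max a b)
  end.

Definition mp_times (x y : mp) : mp :=
  match x, y with
  | Some a, Some b => Some (a + b)
  | _, _ => None
  end.

Variable n : nat.
Definition mpmx := 'I_n -> 'I_n -> mp.
Definition mpvec := 'I_n -> mp.

Definition mx_plus (A B : mpmx) : mpmx := fun i j => mp_plus (A i j) (B i j).
Definition mx_mul (A B : mpmx) : mpmx :=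
  fun i j => \big[mp_plus/eps]_(k < n) mp_times (A i k) (B k j).
Definition mx_mulv (A : mpmx) (v : mpvec) : mpvec :=
  fun i => \big[mp_plus/eps]_(k < n) mp_times (A i k) (v k).
Definition mx_E : mpmx := fun i j => if i == j then Some 0 else eps.
Definition mx_pow (A : mpmx) (q : nat) : mpmx := iter q (mx_mul A) mx_E.
Definition mx_tr (A : mpmx) : mpmx := fun i j => A j i.
Definition mx_diag (t : 'I_n -> R) : mpmx :=
  fun i j => if i == j then Some (t i) else eps.

Definition mx_arc (A : mpmx) : rel 'I_n := fun i j => A i j != eps.
(* a path with vertex list i :: s has length size s (number of arcs) *)
Definition mx_acyclic (A : mpmx) : Prop :=
  forall (i : 'I_n) (s : seq 'I_n), path (mx_arc A) i s -> last i s = i -> s = [::].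
Definition mx_longest_path_length (A : mpmx) (p : nat) : Prop :=
  (exists (i : 'I_n) (s : seq 'I_n), path (mx_arc A) i s /\ size s = p) /\
  (forall (i : 'I_n) (s : seq 'I_n), path (mx_arc A) i s -> (size s <= p)%N).

End MaxPlus.

(* Tandem system with n.+1 nodes; paper's node i is index i-1 here. *)
Section Tandem.
Variable R : realFieldType.
Variable n : nat.

Definition prev_node (i : 'I_n.+1) : 'I_n.+1 :=
  if val i is j.+1 then inord j else ord_max.

Definition Gmx (r : 'I_n.+1 -> nat) (m : nat) : mpmx R n.+1 :=
  fun i j =>
    if ((val j == (val i).+1) && (r j == m)%N)
       || [&& i == ord_max, j == ord0 & (r ord0 == m)%N]
    then Some 0 else eps R.

Definition Tdiag (tau : 'I_n.+1 -> nat -> R) (k : nat) : mpmx R n.+1 :=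
  mx_diag (fun i => tau i k).

Definition Tmx (r : 'I_n.+1 -> nat) (tau : 'I_n.+1 -> nat -> R) (p k m : nat)
  : mpmx R n.+1 :=
  mx_mul (mx_pow (mx_plus (@mx_E R n.+1) (mx_mul (Tdiag tau k) (mx_tr (Gmx r 0))))
                 p)
         (mx_mul (Tdiag tau k)
            (if m == 1%N then mx_plus (@mx_E R n.+1) (mx_tr (Gmx r 1))
             else mx_tr (Gmx r m))).

End Tandem.

From HB Require Import structures.
From mathcomp Require Import all_boot all_order all_algebra zify.
Import Order.TTheory GRing.Theory Num.Theory.
Local Open Scope ring_scope.
Set Implicit Arguments. Unset Strict Implicit.

(* Fix k >= 1 and write A = T_k ⊗ G_0^T.  Row i of the recursion reads
   d_i(k) = τ_ik ⊗ (d_{i-1}(k - r_i) ⊕ d_i(k-1)), and splitting off the terms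
   with r_i = 0 (which refer to the same epoch k) turns the whole system into a
   max-plus linear equation  d(k) = A ⊗ d(k) ⊕ b(k)  with
   b(k) = ⊕_{m=1..M} T_k ⊗ H_m ⊗ d(k-m),  H_1 = E ⊕ G_1^T,  H_m = G_m^T.
   Such an equation is solved by the truncated Kleene star: if A^{p+1} = ε then
   x = A x ⊕ b forces x = (E ⊕ A)^p b.  Nonzero entries of A^q are walks of
   length q in the graph of G_0 (reversed).  Every arc of that graph goes from a
   node to its cyclic successor and never enters a node v with r_v > 0, so the
   cyclic distance from such a v strictly increases along paths: the graph is
   acyclic, its paths have length at most n, and a longest path length p exists. *)

Lemma mp_plusA (R : realFieldType) : associative (@mp_plus R).
Proof. by move=> [a|] [b|] [c|] //=; rewrite maxA. Qed.
Lemma mp_plusC (R : realFieldType) : commutative (@mp_plus R).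
Proof. by move=> [a|] [b|] //=; rewrite maxC. Qed.
Lemma mp_plus0l (R : realFieldType) : left_id (eps R) (@mp_plus R).
Proof. by case. Qed.
HB.instance Definition _ (R : realFieldType) :=
  Monoid.isComLaw.Build (mp R) (eps R) (@mp_plus R)
    (@mp_plusA R) (@mp_plusC R) (@mp_plus0l R).

Section MaxPlusScalars.
Variable R : realFieldType.
Implicit Types x y z : mp R.

Lemma mp_plus0r x : mp_plus x (eps R) = x.
Proof. by case: x. Qed.

Lemma mp_plusxx x : mp_plus x x = x.
Proof. by case: x => //= a; rewrite maxxx. Qed.

Lemma mp_timesA : associative (@mp_times R).
Proof. by move=> [a|] [b|] [c|] //=; rewrite addrA. Qed.

Lemma mp_timesC : commutative (@mp_times R).
Proof. by move=> [a|] [b|] //=; rewrite addrC. Qed.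

Lemma mp_times0r x : mp_times x (eps R) = eps R.
Proof. by case: x. Qed.

Lemma mp_times1l x : mp_times (Some 0) x = x.
Proof. by case: x => //= a; rewrite add0r. Qed.

(* ⊗ distributes over ⊕: translation is monotone on a totally ordered field. *)
Lemma mp_timesDr x y z : mp_times x (mp_plus y z) = mp_plus (mp_times x y) (mp_times x z).
Proof. by case: x y z => [a|] [b|] [c|] //=; rewrite real_addr_maxr ?num_real. Qed.

Lemma mp_timesDl x y z : mp_times (mp_plus y z) x = mp_plus (mp_times y x) (mp_times z x).
Proof. by rewrite mp_timesC mp_timesDr !(mp_timesC x). Qed.

Lemma mp_times_sumr x (I : Type) (s : seq I) (P : pred I) (F : I -> mp R) :
  mp_times x (\big[@mp_plus R/eps R]_(i <- s | P i) F i)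
  = \big[@mp_plus R/eps R]_(i <- s | P i) mp_times x (F i).
Proof. exact: (big_morph (mp_times x) (mp_timesDr x) (mp_times0r x)). Qed.

Lemma mp_times_suml x (I : Type) (s : seq I) (P : pred I) (F : I -> mp R) :
  mp_times (\big[@mp_plus R/eps R]_(i <- s | P i) F i) x
  = \big[@mp_plus R/eps R]_(i <- s | P i) mp_times (F i) x.
Proof.
exact: (big_morph (fun y => mp_times y x) (mp_timesDl x)
                  (erefl : mp_times (eps R) x = eps R)).
Qed.

Lemma mp_times_neq_eps x y : mp_times x y != eps R -> x != eps R /\ y != eps R.
Proof. by case: x; case: y. Qed.

Lemma mp_sum_neq_eps n (F : 'I_n -> mp R) :
  \big[@mp_plus R/eps R]_(k < n) F k != eps R -> exists k, F k != eps R.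
Proof.
move=> hF; apply/existsP; apply: contraNT hF => /existsPn hF.
by apply/eqP; apply: big1 => k _; apply/eqP; move/negPn: (hF k).
Qed.

Lemma mp_sum_nat_pick (F : nat -> mp R) a b j :
  \big[@mp_plus R/eps R]_(a <= m < b) (if j == m then F m else eps R)
  = if (a <= j < b)%N then F j else eps R.
Proof.
case: ifP => hj.
  rewrite (bigD1_seq j) ?mem_index_iota ?iota_uniq //= eqxx.
  by rewrite big1 ?mp_plus0r // => m; rewrite eq_sym => /negPf ->.
rewrite big_nat_cond big1 // => m /andP[hm _]; case: eqP => // hjm.
by rewrite hjm hm in hj.
Qed.

Definition mp_le x y := mp_plus x y = y.

End MaxPlusScalars.

Section MaxPlusMatrices.
Variables (R : realFieldType) (n : nat).
Implicit Types (A B : mpmx R n) (v w : mpvec R n).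

Lemma mx_mulvA A B v i : mx_mulv (mx_mul A B) v i = mx_mulv A (mx_mulv B v) i.
Proof.
rewrite /mx_mulv /mx_mul.
under eq_bigr => k _ do rewrite mp_times_suml.
rewrite exchange_big /=; apply: eq_bigr => k _.
by rewrite mp_times_sumr; apply: eq_bigr => l _; rewrite mp_timesA.
Qed.

Lemma mx_mulvDl A B v i :
  mx_mulv (mx_plus A B) v i = mp_plus (mx_mulv A v i) (mx_mulv B v i).
Proof. by rewrite /mx_mulv -big_split; apply: eq_bigr => k _; rewrite mp_timesDl. Qed.

Lemma mx_mulvDr A v w i :
  mx_mulv A (fun j => mp_plus (v j) (w j)) i = mp_plus (mx_mulv A v i) (mx_mulv A w i).
Proof. by rewrite /mx_mulv -big_split; apply: eq_bigr => k _; rewrite mp_timesDr. Qed.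

Lemma mx_mulv_sumr A (I : Type) (s : seq I) (P : pred I) (F : I -> mpvec R n) i :
  mx_mulv A (fun j => \big[@mp_plus R/eps R]_(m <- s | P m) F m j) i
  = \big[@mp_plus R/eps R]_(m <- s | P m) mx_mulv A (F m) i.
Proof.
rewrite /mx_mulv exchange_big /=.
by apply: eq_bigr => k _; rewrite mp_times_sumr.
Qed.

Lemma mx_mulv1 v i : mx_mulv (@mx_E R n) v i = v i.
Proof.
rewrite /mx_mulv (bigD1 i) //= big1 ?mp_plus0r /mx_E ?eqxx ?mp_times1l // => j.
by rewrite eq_sym => /negPf ->.
Qed.

Lemma mx_mulv_ext A v w i : (forall j, v j = w j) -> mx_mulv A v i = mx_mulv A w i.
Proof. by move=> evw; apply: eq_bigr => k _; rewrite evw. Qed.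

Lemma mx_mulv_mono A v w :
  (forall j, mp_le (v j) (w j)) -> forall i, mp_le (mx_mulv A v i) (mx_mulv A w i).
Proof. by move=> vw i; rewrite /mp_le -mx_mulvDr; apply: mx_mulv_ext. Qed.

Lemma mx_pow_walk A q (i j : 'I_n) :
  mx_pow A q i j != eps R ->
  exists s, [/\ path (fun x y => A y x != eps R) j s, last j s = i & size s = q].
Proof.
elim: q i => [|q IHq] i /=.
  by rewrite /mx_E; case: (i =P j) => [-> _|_]; [exists [::] | rewrite eqxx].
rewrite /mx_mul => /mp_sum_neq_eps [l /mp_times_neq_eps [Ail Aqlj]].
have [s [walk_s last_s size_s]] := IHq _ Aqlj.
exists (rcons s i); split; first by rewrite rcons_path walk_s last_s.
  by rewrite last_rcons.
by rewrite size_rcons size_s.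
Qed.

(* The partial products y_q = (E ⊕ A)^q b
   increase from b, stay below x, and x = A^(q+1) x ⊕ y_q for every q. *)
Section TruncatedStar.
Variables (A : mpmx R n) (x b : mpvec R n) (p : nat).
Hypothesis x_fix : forall i, x i = mp_plus (mx_mulv A x i) (b i).
Hypothesis A_nilpotent : forall i j, mx_pow A p.+1 i j = eps R.

Let y q := mx_mulv (mx_pow (mx_plus (@mx_E R n) A) q) b.

Let y0 i : y 0 i = b i.
Proof. exact: mx_mulv1. Qed.

Let yS q i : y q.+1 i = mp_plus (y q i) (mx_mulv A (y q) i).
Proof. by rewrite /y /= mx_mulvA mx_mulvDl mx_mulv1. Qed.

Let b_le_y q i : mp_le (b i) (y q i).
Proof.
elim: q i => [|q IHq] i; first by rewrite /mp_le y0 mp_plusxx.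
by rewrite /mp_le yS mp_plusA IHq.
Qed.

Let y_le_x q i : mp_le (y q i) (x i).
Proof.
elim: q i => [|q IHq] i; first by rewrite /mp_le y0 x_fix mp_plusC -mp_plusA mp_plusxx.
have Ay_le_Ax := mx_mulv_mono A IHq i.
rewrite /mp_le yS [mp_plus (y q i) _]mp_plusC -mp_plusA IHq {1}x_fix mp_plusA.
by rewrite Ay_le_Ax -x_fix.
Qed.

Let x_unfold q i : x i = mp_plus (mx_mulv (mx_pow A q.+1) x i) (y q i).
Proof.
elim: q i => [|q IHq] i.
  rewrite y0 {1}x_fix; congr mp_plus; rewrite /= mx_mulvA.
  by apply: mx_mulv_ext => j; rewrite mx_mulv1.
have -> : mx_mulv (mx_pow A q.+2) x i = mx_mulv A (mx_mulv (mx_pow A q.+1) x) i.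
  by rewrite /= mx_mulvA.
rewrite yS mp_plusA [mp_plus (mx_mulv A _ i) (y q i)]mp_plusC -mp_plusA -mx_mulvDr.
rewrite (mx_mulv_ext _ _ (fun j => esym (IHq j))).
by rewrite mp_plusC -(b_le_y q i) mp_plusA -x_fix mp_plusC y_le_x.
Qed.

Lemma truncated_star_solution i :
  x i = mx_mulv (mx_pow (mx_plus (@mx_E R n) A) p) b i.
Proof.
rewrite (x_unfold p i) {1}/mx_mulv big1 ?mp_plus0l // => j _.
by rewrite A_nilpotent.
Qed.

End TruncatedStar.

Lemma mx_mul_diag (t : 'I_n -> R) A i j :
  mx_mul (mx_diag t) A i j = mp_times (Some (t i)) (A i j).
Proof.
rewrite /mx_mul (bigD1 i) //= big1 ?mp_plus0r /mx_diag ?eqxx // => l.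
by rewrite eq_sym => /negPf ->.
Qed.

Lemma mx_mulv_diag (t : 'I_n -> R) v i :
  mx_mulv (mx_diag t) v i = mp_times (Some (t i)) (v i).
Proof.
rewrite /mx_mulv (bigD1 i) //= big1 ?mp_plus0r /mx_diag ?eqxx // => l.
by rewrite eq_sym => /negPf ->.
Qed.

End MaxPlusMatrices.

Section CycleGraph.
Variables (R : realFieldType) (n : nat) (r : 'I_n.+1 -> nat).

Lemma Gmx_prev m (j i : 'I_n.+1) :
  Gmx R r m j i = if (j == prev_node i) && (r i == m)%N then Some 0 else eps R.
Proof.
rewrite /Gmx /prev_node; case: i => [[|i] lt_i] /=.
  by rewrite (_ : Ordinal lt_i = ord0) //; apply: val_inj.
rewrite andbF orbF eqSS -val_eqE /= inordK 1?eq_sym //.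
exact: ltnW.
Qed.

Lemma G0_arc (x y : 'I_n.+1) :
  mx_arc (Gmx R r 0) x y = (x == prev_node y) && (r y == 0)%N.
Proof. by rewrite /mx_arc Gmx_prev; case: ifP. Qed.

Lemma prev_node_val (y : 'I_n.+1) :
  nat_of_ord (prev_node y) = (if nat_of_ord y is y'.+1 then y' else n).
Proof. by rewrite /prev_node; case: y => [[|y] lt_y] //=; rewrite inordK // ltnW. Qed.

Definition cyc_dist (v x : 'I_n.+1) : nat :=
  if (v <= x)%N then (x - v)%N else (x + n.+1 - v)%N.

Lemma cyc_dist_le v x : (cyc_dist v x <= n)%N.
Proof. by have := ltn_ord x; have := ltn_ord v; rewrite /cyc_dist => ? ?; case: (leqP v x) => ?; lia. Qed.

(* An arc of G_0 never enters a node v with r_v > 0, so it increases the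
   cyclic distance from v by one. *)
Lemma cyc_dist_arc (v x y : 'I_n.+1) :
  r v != 0%N -> mx_arc (Gmx R r 0) x y -> cyc_dist v y = (cyc_dist v x).+1.
Proof.
move=> rv_gt0; rewrite G0_arc => /andP[/eqP x_prev ry0].
have /eqP y_neq_v : (y : nat) != v by apply: contraNneq rv_gt0 => /ord_inj <-.
have x_pred : ((y : nat) = 0 /\ (x : nat) = n) \/ (y : nat) = (x : nat).+1.
  by have := prev_node_val y; rewrite -x_prev; case: (nat_of_ord y) => [|y'] ?; lia.
have := ltn_ord x; have := ltn_ord v; have := ltn_ord y; rewrite /cyc_dist => ? ? ?.
by case: (leqP v x); case: (leqP v y) => ? ?; lia.
Qed.

Lemma cyc_dist_path (v x : 'I_n.+1) s :
  r v != 0%N -> path (mx_arc (Gmx R r 0)) x s ->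
  cyc_dist v (last x s) = (cyc_dist v x + size s)%N.
Proof.
move=> rv_gt0; elim: s x => [|y s IHs] x /=; first by rewrite addn0.
by case/andP=> xy ys; rewrite IHs // (cyc_dist_arc rv_gt0 xy) addSnnS.
Qed.

Hypothesis r_nonzero : exists v, r v != 0%N.

Lemma G0_acyclic : mx_acyclic (Gmx R r 0).
Proof.
have [v rv_gt0] := r_nonzero; move=> i s s_path s_cycle.
have := cyc_dist_path rv_gt0 s_path; rewrite s_cycle => /eqP.
by rewrite -{1}[cyc_dist v i]addn0 eqn_add2l eq_sym size_eq0 => /eqP.
Qed.

Lemma G0_path_size x s : path (mx_arc (Gmx R r 0)) x s -> (size s <= n)%N.
Proof.
have [v rv_gt0] := r_nonzero; move=> s_path.
by have := cyc_dist_path rv_gt0 s_path; have := cyc_dist_le v (last x s); lia.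
Qed.

(* Path lengths are bounded by n, so a longest path exists. *)
Lemma G0_longest_path : exists p, mx_longest_path_length (Gmx R r 0) p.
Proof.
pose has_path L := [exists x : 'I_n.+1, [exists t : L.-tuple 'I_n.+1,
  path (mx_arc (Gmx R r 0)) x t]].
have has_path0 : exists L, has_path L.
  by exists 0%N; apply/existsP; exists ord0; apply/existsP; exists [tuple].
have has_path_le L : has_path L -> (L <= n)%N.
  by case/existsP=> x /existsP [t /G0_path_size]; rewrite size_tuple.
have [p /existsP [x /existsP [t t_path]] p_max] := ex_maxnP has_path0 has_path_le.
exists p; split; first by exists x, t; rewrite size_tuple.
move=> i s s_path; apply: p_max; apply/existsP; exists i; apply/existsP.
by exists (in_tuple s).
Qed.

Lemma mx_mulv_trG m (v : mpvec R n.+1) i :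
  mx_mulv (mx_tr (Gmx R r m)) v i = if (r i == m)%N then v (prev_node i) else eps R.
Proof.
rewrite /mx_mulv /mx_tr; case: ifP => rim.
  rewrite (bigD1 (prev_node i)) //= Gmx_prev eqxx rim mp_times1l big1 ?mp_plus0r //.
  by move=> j j_neq; rewrite Gmx_prev (negPf j_neq).
by apply: big1 => j _; rewrite Gmx_prev rim andbF.
Qed.

Lemma scaled_G0_nilpotent (t : 'I_n.+1 -> R) p :
  mx_longest_path_length (Gmx R r 0) p ->
  forall i j, mx_pow (mx_mul (mx_diag t) (mx_tr (Gmx R r 0))) p.+1 i j = eps R.
Proof.
move=> [_ p_max] i j; apply/eqP/negPn/negP => /mx_pow_walk [s [s_walk _ size_s]].
have : path (mx_arc (Gmx R r 0)) j s.
  by apply: sub_path s_walk => x y; rewrite mx_mul_diag => /mp_times_neq_eps [].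
by move/p_max; rewrite size_s ltnn.
Qed.

End CycleGraph.

Section TandemRecursion.
Variables (R : realFieldType) (n : nat) (r : 'I_n.+1 -> nat).
Variables (tau : 'I_n.+1 -> nat -> R) (d : 'I_n.+1 -> int -> mp R).

Definition Hmx (m : nat) : mpmx R n.+1 :=
  if m == 1%N then mx_plus (@mx_E R n.+1) (mx_tr (Gmx R r 1)) else mx_tr (Gmx R r m).

Lemma Tmx_factor p k m :
  Tmx r tau p k m =
  mx_mul (mx_pow (mx_plus (@mx_E R n.+1) (mx_mul (Tdiag tau k) (mx_tr (Gmx R r 0)))) p)
         (mx_mul (Tdiag tau k) (Hmx m)).
Proof. by []. Qed.

Lemma input_row k m (v : mpvec R n.+1) i :
  mx_mulv (mx_mul (Tdiag tau k) (Hmx m)) v i =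
  mp_times (Some (tau i k))
    (mp_plus (if 1%N == m then v i else eps R)
             (if r i == m then v (prev_node i) else eps R)).
Proof.
rewrite mx_mulvA /Tdiag mx_mulv_diag /Hmx eq_sym; case: eqP => [->|_].
  by rewrite mx_mulvDl mx_mulv1 mx_mulv_trG.
by rewrite mx_mulv_trG mp_plus0l.
Qed.

Hypothesis d_rec : forall i (k : nat), (0 < k)%N ->
  d i k%:Z =
    mp_plus (mp_times (Some (tau i k)) (d (prev_node i) (k%:Z - (r i)%:Z)))
            (mp_times (Some (tau i k)) (d i (k%:Z - 1))).

Lemma departures_fixpoint (M k : nat) :
  (0 < M)%N -> (forall j, (r j <= M)%N) -> (0 < k)%N -> forall i,
  d i k%:Z =
    mp_plus (mx_mulv (mx_mul (Tdiag tau k) (mx_tr (Gmx R r 0))) (fun j => d j k%:Z) i)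
            (\big[@mp_plus R/eps R]_(1 <= m < M.+1)
               mx_mulv (mx_mul (Tdiag tau k) (Hmx m)) (fun j => d j (k%:Z - m%:Z)) i).
Proof.
move=> M_gt0 r_le_M k_gt0 i.
under eq_bigr => m _ do rewrite input_row.
rewrite -mp_times_sumr big_split !mp_sum_nat_pick !ltnS M_gt0 r_le_M !andbT leq0n.
rewrite mx_mulvA /Tdiag mx_mulv_diag mx_mulv_trG d_rec //.
have [r0|_] := posnP (r i).
  by rewrite r0 /= subr0 mp_plus0r.
by rewrite mp_times0r mp_plus0l mp_timesDr mp_plusC.
Qed.

End TandemRecursion.

Theorem mainTheorem3 (R : realFieldType) (n : nat)
  (r : 'I_n.+1 -> nat) (tau : 'I_n.+1 -> nat -> R) (d : 'I_n.+1 -> int -> mp R)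
  (hr : exists i, r i != 0%N)
  (htau : forall i k, (0 < k)%N -> 0 < tau i k)
  (hd0 : forall i, d i 0 = Some 0)
  (hdneg : forall i (k : int), k < 0 -> d i k = eps R)
  (hrec : forall i (k : nat), (0 < k)%N ->
     d i k%:Z =
       mp_plus (mp_times (Some (tau i k)) (d (prev_node i) (k%:Z - (r i)%:Z)))
               (mp_times (Some (tau i k)) (d i (k%:Z - 1)))) :
  mx_acyclic (Gmx R r 0) /\
  exists p : nat, mx_longest_path_length (Gmx R r 0) p /\
    forall k : nat, (0 < k)%N ->
      forall i : 'I_n.+1,
        d i k%:Z =
          \big[@mp_plus R/eps R]_(1 <= m < (\max_(j < n.+1) r j).+1)
             mx_mulv (Tmx r tau p k m) (fun j => d j (k%:Z - m%:Z)) i.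
Proof.
split; first exact: G0_acyclic.
have [p longest_p] := G0_longest_path R hr.
exists p; split => // k k_gt0 i.
have r_le_M j : (r j <= \max_(j < n.+1) r j)%N := leq_bigmax j.
have M_gt0 : (0 < \max_(j < n.+1) r j)%N.
  by have [v] := hr; rewrite -lt0n => /leq_trans; apply.
have fix_k := departures_fixpoint hrec M_gt0 r_le_M k_gt0.
rewrite (truncated_star_solution fix_k (scaled_G0_nilpotent _ longest_p)).
rewrite mx_mulv_sumr; apply: eq_bigr => m _.
by rewrite Tmx_factor mx_mulvA.
Qed.
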